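(* For every integer $d\ge 1$ we have $\tau(d)<4(2d)^d$. In particular, $\tau(d)$ is finite for all $d$.
   Context: For an integer $d\ge1$, call $[-1,1]^d$ the box. A sequence $v_1,\dots,v_t$ ($t\ge 2$) of vectors in $[-1,1]^d$ is called minimal if (i) $v_1+\dots+v_t\in[-1,1]^d$, and (ii) for every index set $S\subset\{1,\dots,t\}$ with $2\le |S|<t$, the sum $\sum_{i\in S}v_i$ lies outside $[-1,1]^d$. Let $\tau(d)$ denote the largest $t$ for which a minimal sequence of length $t$ in $[-1,1]^d$ exists (note $\tau(d)\ge 2$, since condition (ii) is vacuous for $t=2$). Equivalently, $\tau(d)$ is the smallest integer such that whenever $v_1,\dots,v_t\in[-1,1]^d$, $t\ge2$, have sum in $[-1,1]^d$, there is $S\subseteq\{1,\dots,t\}$ with $2\le|S|\le\tau(d)$ and $\sum_{i\in S}v_i\in[-1,1]^d$. *)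

From HB Require Import structures.
From mathcomp Require Import all_boot all_order all_algebra.
From mathcomp Require Import reals.
Set Implicit Arguments. Unset Strict Implicit. Unset Printing Implicit Defensive.
Import Order.TTheory GRing.Theory Num.Theory.
Local Open Scope ring_scope.

Definition in_box (R : realType) (d : nat) (x : 'rV[R]_d) : Prop :=
  forall j : 'I_d, -1 <= x 0 j <= 1.

Definition minimal_seq (R : realType) (d t : nat) (v : 'I_t -> 'rV[R]_d) : Prop :=
  [/\ (2 <= t)%N,
      (forall i, in_box (v i)),
      in_box (\sum_(i < t) v i)
    & forall S : {set 'I_t}, (2 <= #|S|)%N -> (#|S| < t)%N ->
        ~ in_box (\sum_(i in S) v i)].

From HB Require Import structures.
From mathcomp Require Import all_boot all_order all_algebra.
From mathcomp Require Import reals.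
From mathcomp Require Import lra zify.
Set Implicit Arguments. Unset Strict Implicit. Unset Printing Implicit Defensive.
Import Order.TTheory GRing.Theory Num.Theory.
Local Open Scope ring_scope.

(* Append u_0 = -(v_1 + ... + v_t): the resulting t+1 vectors of the box sum to
   zero. A Steinitz-type argument orders them so that every initial segment has
   its sum in [-d,d]^d. Going backwards from the full set, one keeps weights
   l_i in [0,1] on the current set X with sum |X| - d and sum_i l_i u_i = 0;
   then sum_X u_i = sum_X (1 - l_i) u_i has coordinates bounded by d. To remove
   a vector, rescale the weights to total |X| - 1 - d and move to a vertex of
   the polytope of such weights: at most d+1 weights are fractional there, so
   one of them vanishes. Cutting [-d,d]^d into (2d)^d unit cells, if
   t >= 4 (2d)^d two initial segments whose lengths differ by at least 2 have
   partial sums in a common cell. Their difference is a subsum in the box with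
   between 2 and t-1 terms, and either it or its complement avoids u_0,
   contradicting minimality. *)

Lemma exists_linear_dependence (K : fieldType) (n : nat) (I : finType)
    (w : I -> 'rV[K]_n) (F : {set I}) :
  (n < #|F|)%N ->
  exists z : I -> K, [/\ exists i, z i != 0, forall i, i \notin F -> z i = 0
                       & \sum_i z i *: w i = 0].
Proof.
move=> lt_nF; have /card_gt0P[i0 Fi0] : (0 < #|F|)%N by lia.
pose M : 'M[K]_(#|F|, n) := \matrix_a w (enum_val a).
have /rowV0Pn[v /sub_kermxP vM /rV0Pn[b nz_vb]] : kermx M != 0.
  by rewrite -mxrank_eq0 mxrank_ker; have := rank_leq_col M; lia.
pose z i := if i \in F then v 0 (enum_rank_in Fi0 i) else 0.
exists z; split.
- by exists (enum_val b); rewrite /z enum_valP enum_valK_in.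
- by move=> i /negbTE; rewrite /z => ->.
- rewrite -[RHS]vM mulmx_sum_row (bigID (mem F) predT) /=.
  rewrite [X in _ + X]big1 => [|i /negbTE]; last by rewrite /z => ->; rewrite scale0r.
  rewrite addr0 (big_enum_val (fun i => z i *: w i)) /=.
  by apply: eq_bigr => a _; rewrite /z enum_valP enum_valK_in rowK.
Qed.

Lemma exists_affine_dependence (K : fieldType) (d : nat) (I : finType)
    (u : I -> 'rV[K]_d) (F : {set I}) :
  (d.+1 < #|F|)%N ->
  exists z : I -> K, [/\ exists i, z i != 0, forall i, i \notin F -> z i = 0,
                       \sum_i z i = 0 & \sum_i z i *: u i = 0].
Proof.
move=> lt_dF; pose w i : 'rV[K]_(1 + d) := row_mx 1 (u i).
have [z [nz_z zF zw]] := exists_linear_dependence w lt_dF.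
exists z; split=> //.
  move/matrixP/(_ 0 (lshift d 0)): zw; rewrite summxE mxE; apply: etrans.
  by apply: eq_bigr => i _; rewrite mxE row_mxEl mxE eqxx mulr1.
apply/rowP => j; move/matrixP/(_ 0 (rshift 1 j)): zw; rewrite summxE !mxE; apply: etrans.
by rewrite summxE; apply: eq_bigr => i _; rewrite [LHS]mxE [RHS]mxE row_mxEr.
Qed.

Section ExitTime.
Variable R : realFieldType.
Implicit Types a z s : R.

Definition exit_time a z : R := if 0 < z then (1 - a) / z else a / - z.

Lemma exit_time_gt0 a z : 0 < a < 1 -> z != 0 -> 0 < exit_time a z.
Proof.
move=> /andP[a0 a1] z0; rewrite /exit_time.
case: ifPn => [zp|]; first by rewrite divr_gt0 ?subr_gt0.
by rewrite -leNgt le_eqVlt (negbTE z0) => zn; rewrite divr_gt0 ?oppr_gt0.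
Qed.

Lemma exit_time_itv a z s :
  z != 0 -> 0 <= a <= 1 -> 0 <= s <= exit_time a z -> 0 <= a + s * z <= 1.
Proof.
move=> z0 /andP[a0 a1] /andP[s0]; rewrite /exit_time; case: ifPn => [zp|].
  rewrite -(ler_pM2r zp) divfK ?gt_eqF // => hs.
  have : 0 <= s * z by rewrite mulr_ge0 // ltW.
  lra.
rewrite -leNgt le_eqVlt (negbTE z0) /= -oppr_gt0 => zn.
rewrite -(ler_pM2r zn) divfK ?gt_eqF // => hs.
have : 0 <= s * - z by rewrite mulr_ge0 // ltW.
rewrite mulrN in hs *; lra.
Qed.

Lemma exit_time_exit a z : z != 0 -> ~~ (0 < a + exit_time a z * z < 1).
Proof.
move=> z0; rewrite /exit_time; case: ifP => _.
  by rewrite divfK // addrC subrK ltxx andbF.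
by rewrite -[X in _ * X]opprK mulrN divfK ?oppr_eq0 // subrr ltxx.
Qed.

End ExitTime.

Definition fractional (R : numDomainType) (I : finType) (l : I -> R) : {set I} :=
  [set i | 0 < l i < 1].

Section Weightings.
Variables (R : realFieldType) (d : nat) (I : finType) (u : I -> 'rV[R]_d).
Implicit Types (X : {set I}) (c : R) (l : I -> R).

Definition weighting (X : {set I}) (c : R) (l : I -> R) : Prop :=
  [/\ forall i, 0 <= l i <= 1, forall i, i \notin X -> l i = 0,
      \sum_i l i = c & \sum_i l i *: u i = 0].

Lemma weighting_perturb X c l (z : I -> R) :
  weighting X c l -> (forall i, z i != 0 -> i \in fractional l) ->
  \sum_i z i = 0 -> \sum_i z i *: u i = 0 -> (exists i, z i != 0) ->
  exists l', weighting X c l' /\ (#|fractional l'| < #|fractional l|)%N.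
Proof.
move=> [l01 lX lc lu] zF z_sum zu [i1 zi1].
have frac_z i : z i != 0 -> 0 < l i < 1 by move/zF; rewrite inE.
have [i0 zi0 i0_min] :=
  @arg_minP _ _ _ i1 [pred i | z i != 0] (fun i => exit_time (l i) (z i)) zi1.
set s := exit_time (l i0) (z i0) in i0_min.
have s_gt0 : 0 < s by apply: exit_time_gt0 => //; apply: frac_z.
pose l' i := l i + s * z i.
have l'E i : z i = 0 -> l' i = l i by rewrite /l' => ->; rewrite mulr0 addr0.
have frac_l' : fractional l' \subset fractional l :\ i0.
  apply/subsetP => i; rewrite !inE; have [zi|zi] := eqVneq (z i) 0.
    rewrite l'E // => ->; rewrite andbT.
    by apply/eqP => ei; move: zi0; rewrite /= -ei zi eqxx.
  move=> fi; rewrite frac_z ?andbT //; apply: contraNneq (exit_time_exit (l i0) zi0).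
  by move=> ei; move: fi; rewrite ei.
exists l'; split; last first.
  have := subset_leq_card frac_l'; have := cardsD1 i0 (fractional l).
  by rewrite zF //; lia.
split.
- move=> i; have [zi|zi] := eqVneq (z i) 0; first by rewrite l'E.
  by apply: exit_time_itv => //; rewrite (ltW s_gt0) i0_min.
- move=> i iX; have zi : z i = 0.
    apply/eqP; apply: contraNT iX => /frac_z.
    by apply: contraTT => /lX ->; rewrite ltxx.
  by rewrite l'E ?lX.
- by rewrite big_split /= -mulr_sumr z_sum mulr0 addr0.
- under eq_bigr do rewrite scalerDl -scalerA.
  by rewrite big_split /= -scaler_sumr zu scaler0 lu addr0.
Qed.

Lemma weighting_few_fractional X c l :
  weighting X c l -> exists l', weighting X c l' /\ (#|fractional l'| <= d.+1)%N.
Proof.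
have [n] := ubnP #|fractional l|; elim: n l => // n IH l /[!ltnS] le_n wl.
have [small|big] := leqP #|fractional l| d.+1; first by exists l.
have [z [nz_z zF z_sum zu]] := exists_affine_dependence u big.
have [|l' [wl' lt_l']] := weighting_perturb wl _ z_sum zu nz_z.
  by move=> i; apply: contraR => /zF ->.
by apply: (IH l') => //; lia.
Qed.

Lemma weighting_scale X c l q :
  0 <= q <= 1 -> weighting X c l -> weighting X (c * q) (fun i => l i * q).
Proof.
move=> /andP[q0 q1] [l01 lX lc lu]; split.
- by move=> i; have /andP[l0 l1] := l01 i; rewrite mulr_ge0 //=; nra.
- by move=> i /lX ->; rewrite mul0r.
- by rewrite -mulr_suml lc.
- under eq_bigr do rewrite mulrC -scalerA.
  by rewrite -scaler_sumr lu scaler0.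
Qed.

Lemma weighting_setD1 X c l i :
  l i = 0 -> weighting X c l -> weighting (X :\ i) c l.
Proof.
move=> li0 [l01 lX lc lu]; split => // j.
by rewrite in_setD1 negb_and negbK => /orP[/eqP -> //|/lX].
Qed.

Lemma weighting_has_zero X c l :
  c + d%:R + 1 <= #|X|%:R -> (#|fractional l| <= d.+1)%N -> weighting X c l ->
  exists2 i, i \in X & l i = 0.
Proof.
move=> le_cX le_F [l01 lX lc _].
have [i /andP[iX /eqP li0]|no_zero] := pickP [pred i | (i \in X) && (l i == 0)].
  by exists i.
have l_gt0 i : i \in X -> 0 < l i.
  move=> iX; have := no_zero i; rewrite /= iX /= => /negbT l_nz.
  by rewrite lt_def l_nz; case/andP: (l01 i).
set F := fractional l in le_F.
have FX : F \subset X.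
  by apply/subsetP => i; rewrite inE; apply: contraTT => /lX ->; rewrite ltxx.
have c_eq : c = #|X :\: F|%:R + \sum_(i in F) l i.
  rewrite -lc (bigID (mem X) predT) /= [Y in _ + Y]big1 => [|i /lX //].
  rewrite addr0 (big_setID F) /= (setIidPr FX) addrC -sumr_const; congr (_ + _).
  apply: eq_bigr => i /setDP[iX]; rewrite /F inE l_gt0 //= -leNgt => l_ge1.
  by apply/eqP; rewrite eq_le l_ge1 andbT; case/andP: (l01 i).
have card_X : #|X|%:R = #|X :\: F|%:R + #|F|%:R :> R.
  by rewrite -natrD addnC -(cardsID F X) (setIidPr FX).
have [F0|/set0Pn[i1 Fi1]] := eqVneq F set0.
  move: c_eq; rewrite F0 setD0 big_set0 addr0 => c_eq.
  by have := ler0n R d; lra.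
have : 0 < \sum_(i in F) l i.
  rewrite (big_setD1 i1) //=; have := l_gt0 i1 (subsetP FX _ Fi1).
  suff : 0 <= \sum_(i in F :\ i1) l i by lra.
  by apply: sumr_ge0 => i _; case/andP: (l01 i).
have : #|F|%:R <= d%:R + 1 :> R by rewrite natr1 ler_nat.
lra.
Qed.

Lemma weighting_drop X l :
  (d < #|X|)%N -> weighting X (#|X| - d)%:R l ->
  exists2 i, i \in X & exists l', weighting (X :\ i) (#|X|.-1 - d)%:R l'.
Proof.
set m := #|X| => lt_dm wl.
pose q : R := (m.-1 - d)%:R / (m - d)%:R.
have md_gt0 : 0 < (m - d)%:R :> R by rewrite ltr0n subn_gt0.
have q01 : 0 <= q <= 1.
  by rewrite /q divr_ge0 ?ler0n //= ler_pdivrMr // mul1r ler_nat; lia.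
have /weighting_few_fractional[l' [wl' le_F]] := weighting_scale q01 wl.
rewrite mulrC divfK ?gt_eqF // in wl'.
have [|i iX li0] := weighting_has_zero _ le_F wl'.
  by rewrite -natrD natr1 ler_nat /m; lia.
by exists i => //; exists l'; apply: weighting_setD1.
Qed.

Definition weighted X : Prop :=
  (d <= #|X|)%N -> exists l, weighting X (#|X| - d)%:R l.

Lemma weighted_setT : \sum_i u i = 0 -> weighted [set: I].
Proof.
move=> u_sum le_dI; rewrite cardsT in le_dI *.
pose c : R := (#|I| - d)%:R / #|I|%:R.
exists (fun=> c); split => //.
- move=> _; rewrite /c divr_ge0 ?ler0n //=; have [->|I_gt0] := posnP #|I|.
    by rewrite invr0 mulr0 ler01.
  by rewrite ler_pdivrMr ?ltr0n // mul1r ler_nat leq_subr.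
- by move=> i; rewrite in_setT.
- rewrite sumr_const -[LHS]mulr_natr /c; have [I0|I_gt0] := posnP #|I|.
    by rewrite I0 mulr0; have -> : d = 0%N by lia.
  by rewrite divfK // pnatr_eq0 -lt0n.
- by rewrite -scaler_sumr u_sum scaler0.
Qed.

Lemma weighted_setD1 X :
  (0 < #|X|)%N -> weighted X -> exists2 i, i \in X & weighted (X :\ i).
Proof.
move=> X_gt0 wX; have /card_gt0P[i0 Xi0] := X_gt0.
have card_D1 i : i \in X -> #|X :\ i| = #|X|.-1.
  by move=> iX; have := cardsD1 i X; rewrite iX; lia.
have [lt_dX|le_Xd] := ltnP d #|X|.
  have [l wl] := wX (ltnW lt_dX).
  have [i iX [l' wl']] := weighting_drop lt_dX wl.
  by exists i => // _; exists l'; rewrite card_D1.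
by exists i0 => //; rewrite /weighted card_D1 // => le_dX; exfalso; lia.
Qed.

Lemma weighted_sum_bound X :
  (forall i j, `|u i 0 j| <= 1) -> weighted X ->
  forall j, `|(\sum_(i in X) u i) 0 j| <= d%:R.
Proof.
move=> u_le1 wX j; rewrite summxE.
have [lt_Xd|le_dX] := ltnP #|X| d.
  apply: le_trans (ler_norm_sum _ _ _) _.
  apply: le_trans (_ : \sum_(i in X) 1 <= _).
    by apply: ler_sum => i _; apply: u_le1.
  by rewrite sumr_const ler_nat ltnW.
have [l [l01 lX lc lu]] := wX le_dX.
have sum_X (f : I -> R) :
    (forall i, i \notin X -> f i = 0) -> \sum_(i in X) f i = \sum_i f i.
  exact: big_rmcond.
have lu_j : \sum_(i in X) l i * u i 0 j = 0.
  rewrite sum_X => [|i /lX ->]; last by rewrite mul0r.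
  move/matrixP/(_ 0 j): lu; rewrite summxE mxE; apply: etrans.
  by apply: eq_bigr => i _; rewrite mxE.
have -> : \sum_(i in X) u i 0 j = \sum_(i in X) (1 - l i) * u i 0 j.
  by under [RHS]eq_bigr do rewrite mulrBl mul1r; rewrite sumrB lu_j subr0.
apply: le_trans (ler_norm_sum _ _ _) _.
apply: le_trans (_ : \sum_(i in X) (1 - l i) <= _).
  apply: ler_sum => i _; have /andP[l0 l1] := l01 i.
  by rewrite normrM ger0_norm ?subr_ge0 // ler_piMr ?subr_ge0 ?u_le1.
by rewrite sumrB (sum_X l lX) lc sumr_const natrB // subKr.
Qed.

Lemma weighted_chain m X :
  #|X| = m -> weighted X ->
  exists B : nat -> {set I},
    [/\ B m = X, forall k k', (k <= k' <= m)%N -> B k \subset B k'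
      & forall k, (k <= m)%N -> #|B k| = k /\ weighted (B k)].
Proof.
elim: m X => [|m IH] X cardX wX.
  by exists (fun=> X); split=> // k; rewrite leqn0 => /eqP ->.
have [|i iX wXi] := weighted_setD1 _ wX; first by rewrite cardX.
have [|B [BmE B_sub B_card]] := IH (X :\ i) _ wXi.
  by have := cardsD1 i X; rewrite iX cardX; lia.
exists (fun k => if k == m.+1 then X else B k); split=> [|k k'|k]; rewrite ?eqxx //.
- move=> /andP[le_kk' le_k'm]; have [ek'|ne_k'] := eqVneq k' m.+1.
    case: eqVneq => [_|ne_k]; first exact: subxx.
    by apply: subset_trans (B_sub k m _) _; rewrite ?BmE ?subD1set //; lia.
  have ne_k : k != m.+1 by apply: contra_neq ne_k' => ek; lia.
  by rewrite (negbTE ne_k); apply: B_sub; lia.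
- move=> le_km; case: eqVneq => [-> //|ne_k].
  by apply: B_card; lia.
Qed.

End Weightings.

Section Cells.
Variables (R : archiRealFieldType) (d : nat).

(* The index of the unit interval of [-d, d] containing x; the clamp puts x = d
   into the last one. *)
Definition cell (x : R) : 'I_(2 * d).-1.+1 :=
  inord (minn (Num.truncn (x + d%:R)) (2 * d).-1).

Lemma cell_close x y :
  `|x| <= d%:R -> `|y| <= d%:R -> cell x = cell y -> `|x - y| <= 1.
Proof.
rewrite !ler_norml => /andP[x_ge x_le] /andP[y_ge y_le].
move/(congr1 (@nat_of_ord _)); rewrite /cell !inordK ?ltnS ?geq_minr //.
have := @truncn_itv R (x + d%:R); have := @truncn_itv R (y + d%:R).
set p := Num.truncn (x + d%:R); set q := Num.truncn (y + d%:R).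
have [d_x d_y] : 0 <= x + d%:R /\ 0 <= y + d%:R by split; lra.
move=> /(_ d_y)/andP[q_le q_gt] /(_ d_x)/andP[p_le p_gt].
rewrite -!natr1 in p_gt q_gt.
have [e_pq _|ne_pq e_pq] := eqVneq p q; first by rewrite e_pq in p_le p_gt; lra.
have [K_p K_q] : ((2 * d).-1 <= p)%N /\ ((2 * d).-1 <= q)%N by lia.
have : (2 * d)%:R <= (2 * d).-1%:R + 1 :> R by rewrite natr1 ler_nat; lia.
move: K_p K_q; rewrite -!(ler_nat R) natrM => K_p K_q.
lra.
Qed.

Lemma exists_close_pair (s : nat -> 'rV[R]_d) n :
  (forall k, (k < n)%N -> forall j, `|s k 0 j| <= d%:R) ->
  (2 * (2 * d) ^ d < n)%N ->
  exists a b, (a.+2 <= b < n)%N /\ forall j, `|s b 0 j - s a 0 j| <= 1.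
Proof.
move=> s_le lt_n.
(* Only even indices are compared, so that two colliding ones differ by 2. *)
pose cells (i : 'I_((2 * d) ^ d).+1) := [ffun j => cell (s (2 * i)%N 0 j)].
have /injectivePn[i [i' ne_ii' e_cells]] : ~~ injectiveb cells.
  apply/injectiveP => /leq_card; rewrite card_ffun !card_ord.
  suff -> : ((2 * d).-1.+1 ^ d = (2 * d) ^ d)%N by rewrite ltnn.
  by case: d => // d'; rewrite prednK // muln_gt0.
wlog lt_ii' : i i' ne_ii' e_cells / (i < i')%N.
  move=> hwlog; have [lt|lt|/val_inj e] := ltngtP i i'.
  - exact: hwlog ne_ii' e_cells lt.
  - by apply: (hwlog i' i); rewrite 1?eq_sym.
  - by rewrite e eqxx in ne_ii'.
have lt_i'n : (2 * i' < n)%N by have := ltn_ord i'; lia.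
exists (2 * i)%N, (2 * i')%N; split; first lia.
move=> j; apply: cell_close; rewrite ?s_le //; first lia.
by move/ffunP/(_ j): e_cells; rewrite !ffunE.
Qed.

End Cells.

Lemma big_option (V : nmodType) (T : finType) (F : option T -> V) :
  \sum_o F o = F None + \sum_i F (Some i).
Proof.
rewrite (bigD1 None) //=; congr (_ + _).
transitivity (\sum_(i in [set: T]) F (Some i)); last by apply: eq_bigl => i; rewrite inE.
rewrite -(big_imset _ (in2W (@Some_inj _))) /=.
apply: eq_bigl => -[i|]; first by rewrite mem_imset ?inE //; exact: Some_inj.
by apply/esym/imsetP => -[].
Qed.

Lemma in_boxP (R : realType) (d : nat) (x : 'rV[R]_d) :
  in_box x <-> forall j, `|x 0 j| <= 1.
Proof. by split=> x_box j; [rewrite ler_norml | rewrite -ler_norml]; apply: x_box. Qed.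

Section MinimalSequence.
Variables (R : realType) (d t : nat) (v : 'I_t -> 'rV[R]_d).
Hypothesis min_v : minimal_seq v.

Definition completion (o : option 'I_t) : 'rV[R]_d :=
  if o is Some i then v i else - \sum_(i < t) v i.

Lemma completion_le1 o j : `|completion o 0 j| <= 1.
Proof.
have [_ v_box sum_box _] := min_v.
case: o => [i|] /=; first by move: j; apply/in_boxP.
by rewrite mxE normrN; move: j; apply/in_boxP.
Qed.

Lemma completion_sum : \sum_o completion o = 0.
Proof. by rewrite big_option addrC subrr. Qed.

Lemma completion_subsum_not_le1 (D : {set option 'I_t}) :
  (2 <= #|D| < t)%N -> ~ (forall j, `|(\sum_(o in D) completion o) 0 j| <= 1).
Proof.
wlog NoneD : D / None \notin D => [hwlog card_D D_le1|].
  have [NoneD|] := boolP (None \in D); last by move/hwlog; apply.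
  apply: (hwlog (~: D)); first by rewrite inE NoneD.
    by move: card_D; have := cardsC D; rewrite card_option card_ord; lia.
  move=> j; have := completion_sum; rewrite (bigID (mem D) predT) /= => /eqP.
  rewrite addr_eq0 => /eqP sum_D.
  have -> : \sum_(o in ~: D) completion o = - \sum_(o in D) completion o.
    by rewrite sum_D opprK; apply: eq_bigl => o; rewrite inE.
  by rewrite mxE normrN.
move=> card_D D_le1; have [_ _ _ v_min] := min_v.
pose T := [set i | Some i \in D].
have DE : D = Some @: T.
  apply/setP => -[i|]; last by rewrite (negbTE NoneD); apply/esym/imsetP => -[].
  by rewrite mem_imset ?inE //; exact: Some_inj.
have card_T : #|T| = #|D| by rewrite DE card_imset //; exact: Some_inj.
apply: (v_min T); rewrite ?card_T; try lia.
apply/in_boxP => j; move: (D_le1 j).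
by rewrite DE big_imset //; move=> i i' _ _ [].
Qed.

End MinimalSequence.

Theorem theorem1 (R : realType) (d t : nat) (v : 'I_t -> 'rV[R]_d) :
  (1 <= d)%N -> minimal_seq v -> (t < 4 * (2 * d) ^ d)%N.
Proof.
move=> _ min_v; rewrite ltnNge; apply/negP => le_t.
have [B [_ B_sub B_card]] :=
  weighted_chain (erefl #|[set: option 'I_t]|) (weighted_setT (completion_sum v)).
rewrite cardsT card_option card_ord in B_sub B_card.
pose s k := \sum_(o in B k) completion v o.
have s_le k : (k < t)%N -> forall j, `|s k 0 j| <= d%:R.
  move=> lt_kt; have [_ wB] := B_card k (leqW (ltnW lt_kt)).
  exact: (weighted_sum_bound (completion_le1 min_v) wB).
have [|a [b [/andP[lt_ab lt_bt] s_close]]] := exists_close_pair s_le.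
  have : (0 < (2 * d) ^ d)%N by rewrite expn_gt0 muln_gt0; case: (posnP d).
  lia.
have sub_ab : B a \subset B b by apply: B_sub; lia.
have card_D : (2 <= #|B b :\: B a| < t)%N.
  by rewrite cardsD (setIidPr sub_ab) (B_card a _).1 ?(B_card b _).1; lia.
apply: (completion_subsum_not_le1 min_v card_D) => j; move: (s_close j).
by rewrite /s (big_setID (B a)) /= (setIidPr sub_ab) mxE [X in `|X - _|]addrC addrK.
Qed.
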